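(* Let $U\in\mathbb{R}^{d\times n}$ be a frame, $z\in\mathbb{R}^n_{++}$, $c\in\mathbb{R}^n_+$, let $T\subseteq[n]$ have margin $\gamma$, and let $h:=h^{U,z}_T$. Then for any $\alpha\ge1$ satisfying $0\le h(\alpha)-h(1)\le\gamma$, the scaling $z':=z\circ(1_{\bar T}+\alpha1_T)$ satisfies \[\|\mathrm{lev}^U(z)-c\|_2^2-\|\mathrm{lev}^U(z')-c\|_2^2\ge2\gamma(h(\alpha)-h(1)).\]
   Context: A frame is a full row rank matrix $U=(u_1,\dots,u_n)\in\mathbb{R}^{d\times n}$; $Z=\mathrm{diag}(z)$; $\mathrm{lev}^U_j(z):=z_ju_j^{\mathsf T}(UZU^{\mathsf T})^{-1}u_j$; $\bar T=[n]\setminus T$; $1_T$ is the indicator vector; $\circ$ is the entrywise product. Margin of $T$: the largest $\gamma\ge0$ such that some $\nu\in\mathbb{R}$ satisfies $\max_{j\in T}(\mathrm{lev}^U_j(z)-c_j)\le\nu-\gamma\le\nu+\gamma\le\min_{j\notin T}(\mathrm{lev}^U_j(z)-c_j)$. Progress function: $h^{U,z}_T(\alpha):=\sum_{j\in T}\mathrm{lev}^U_j(z\circ(1_{\bar T}+\alpha1_T))$. *)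

From HB Require Import structures.
From mathcomp Require Import all_boot all_order all_algebra.
Set Implicit Arguments. Unset Strict Implicit. Unset Printing Implicit Defensive.
Import Order.TTheory GRing.Theory Num.Theory.
Local Open Scope ring_scope.

Section Defs.
Variables (R : realFieldType) (d n : nat).

Definition frame (U : 'M[R]_(d, n)) : Prop := \rank U = d.

Definition lev (U : 'M[R]_(d, n)) (z : 'rV[R]_n) (j : 'I_n) : R :=
  z 0 j * (((col j U)^T *m invmx (U *m diag_mx z *m U^T) *m col j U) 0 0).

Definition scaleT (T : {set 'I_n}) (alpha : R) (z : 'rV[R]_n) : 'rV[R]_n :=
  \row_j (z 0 j * ((if j \in T then 0 else 1) + alpha * (if j \in T then 1 else 0))).

Definition progress (U : 'M[R]_(d, n)) (z : 'rV[R]_n) (T : {set 'I_n}) (alpha : R) : R :=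
  \sum_(j in T) lev U (scaleT T alpha z) j.

Definition margin_ok (U : 'M[R]_(d, n)) (z c : 'rV[R]_n) (T : {set 'I_n}) (g : R) : Prop :=
  0 <= g /\ exists nu : R,
    (forall j, j \in T -> lev U z j - c 0 j <= nu - g) /\ nu - g <= nu + g /\
    (forall j, j \notin T -> nu + g <= lev U z j - c 0 j).

Definition has_margin (U : 'M[R]_(d, n)) (z c : 'rV[R]_n) (T : {set 'I_n}) (g : R) : Prop :=
  margin_ok U z c T g /\ forall g', margin_ok U z c T g' -> g' <= g.

Definition levdist2 (U : 'M[R]_(d, n)) (z c : 'rV[R]_n) : R :=
  \sum_j (lev U z j - c 0 j) ^+ 2.

End Defs.

(* Write [M(w) = U diag(w) U^T]. The leverages at [w] sum to [tr (M(w) M(w)^-1) = d].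
   Passing from [z] to [z' = z o (1_Tbar + alpha 1_T)] gives [M(z) <= M(z') <= alpha M(z)]
   in the Loewner order, and inversion reverses that order; hence the leverages increase
   on [T] and decrease off [T], and the change [D = lev(z') - lev(z)] moves the mass
   [delta = h(alpha) - h(1)] from the complement of [T] into [T], so that [|D j| <= delta].
   With [a = lev(z) - c] separated by the margin [a <= nu - gamma] on [T] and
   [nu + gamma <= a] off [T], the gain [a^2 - (a + D)^2 = -D (2 a + D)] is then at least
   [-2 nu D + (2 gamma - delta) |D|], which sums to [(2 gamma - delta) 2 delta >= 2 gamma delta]. *)

From HB Require Import structures.
From mathcomp Require Import all_boot all_order all_algebra.
From mathcomp Require Import ring lra.
Import Order.TTheory GRing.Theory Num.Theory.
Local Open Scope ring_scope.
Set Implicit Arguments. Unset Strict Implicit.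

Definition qform (R : comPzRingType) (d : nat) (M : 'M[R]_d) (x : 'rV[R]_d) : R :=
  (x *m M *m x^T) 0 0.

Definition invform (R : comUnitRingType) (d : nat) (M : 'M[R]_d) (u : 'rV[R]_d) : R :=
  qform (invmx M) u.

Section QuadraticForms.
Variables (R : realFieldType) (d : nat).
Implicit Types (M : 'M[R]_d) (x y u : 'rV[R]_d).

Lemma qformZ M a x : qform M (a *: x) = a ^+ 2 * qform M x.
Proof. by rewrite /qform linearZ /= -scalemxAr -!scalemxAl !mxE expr2 mulrA. Qed.

Lemma qformB M x y : M^T = M ->
  qform M (x - y) = qform M x - 2 * (x *m M *m y^T) 0 0 + qform M y.
Proof.
move=> MT; have yMx : y *m M *m x^T = (x *m M *m y^T)^T.
  by rewrite !trmx_mul trmxK MT mulmxA.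
rewrite /qform raddfB /= !(mulmxBl, mulmxBr) yMx.
set a := x *m M *m x^T; set b := x *m M *m y^T; set c := y *m M *m y^T.
by rewrite !mxE; ring.
Qed.

Section Inverse.
Variable M : 'M[R]_d.
Hypotheses (MT : M^T = M) (M_unit : M \in unitmx).

Lemma mulmx_invmx_tr x u : x *m M *m (u *m invmx M)^T = x *m u^T.
Proof. by rewrite trmx_mul trmx_inv MT mulmxA mulmxK. Qed.

Lemma qform_invmx u : qform M (u *m invmx M) = invform M u.
Proof. by rewrite /invform /qform mulmx_invmx_tr. Qed.

Hypothesis M_psd : forall x, 0 <= qform M x.

Lemma lin_sub_qform_le_invform x u : 2 * (x *m u^T) 0 0 - qform M x <= invform M u.
Proof.
have := M_psd (x - u *m invmx M).
by rewrite qformB // mulmx_invmx_tr qform_invmx; lra.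
Qed.

End Inverse.

(* Inversion reverses the Loewner order: use the variational formula
   [invform M' u = max_x (2 x u^T - qform M' x)] at [x = b^-1 u M^-1]. *)
Lemma invform_le_scale M M' u b :
  M^T = M -> M \in unitmx -> M'^T = M' -> M' \in unitmx ->
  (forall x, 0 <= qform M' x) -> 0 < b -> (forall x, qform M' x <= b * qform M x) ->
  invform M u <= b * invform M' u.
Proof.
move=> MT M_unit M'T M'_unit M'_psd b_gt0 le_M'M.
set y := u *m invmx M.
have le_s := lin_sub_qform_le_invform M'T M'_unit M'_psd (b^-1 *: y) u.
rewrite qformZ -scalemxAl mxE in le_s; change ((y *m u^T) 0 0) with (invform M u) in le_s.
have le_q : qform M' y <= b * invform M u by rewrite -qform_invmx //; exact: le_M'M.
have := ler_wpM2l (ltW b_gt0) le_s.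
set q := qform M' y in le_q *; set s := invform M u in le_q *.
have -> : b * (2 * (b^-1 * s) - b^-1 ^+ 2 * q) = 2 * s - b^-1 * q.
  by field; rewrite gt_eqF.
have : b^-1 * q <= s by rewrite ler_pdivrMl.
lra.
Qed.

End QuadraticForms.

Section Gram.
Variables (R : realFieldType) (d n : nat) (U : 'M[R]_(d, n)).
Implicit Types (w : 'rV[R]_n) (x : 'rV[R]_d).

Definition gram w : 'M[R]_d := U *m diag_mx w *m U^T.

Lemma trmx_gram w : (gram w)^T = gram w.
Proof. by rewrite /gram !trmx_mul tr_diag_mx trmxK mulmxA. Qed.

Lemma qform_gram w x : qform (gram w) x = \sum_j w 0 j * (x *m U) 0 j ^+ 2.
Proof.
rewrite /qform /gram !mulmxA -[_ *m U^T *m x^T]mulmxA -trmx_mul mul_mx_diag mxE.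
by apply: eq_bigr => j _; rewrite !mxE; ring.
Qed.

Lemma qform_gram_ge0 w x : (forall j, 0 <= w 0 j) -> 0 <= qform (gram w) x.
Proof. by move=> w_ge0; rewrite qform_gram sumr_ge0 // => j _; rewrite mulr_ge0 ?sqr_ge0. Qed.

Lemma ler_qform_gram w w' x :
  (forall j, w 0 j <= w' 0 j) -> qform (gram w) x <= qform (gram w') x.
Proof. by move=> le_ww'; rewrite !qform_gram ler_sum // => j _; rewrite ler_wpM2r ?sqr_ge0. Qed.

Lemma qform_gram_eq0 w x :
  (forall j, 0 < w 0 j) -> qform (gram w) x = 0 -> x *m U = 0.
Proof.
move=> w_gt0; rewrite qform_gram => /psumr_eq0P eq0; apply/rowP => j.
rewrite [RHS]mxE; have /eqP := eq0 (fun k _ => mulr_ge0 (ltW (w_gt0 k)) (sqr_ge0 _)) j isT.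
by rewrite mulf_eq0 gt_eqF //= sqrf_eq0 => /eqP.
Qed.

Lemma gram_unit w : row_free U -> (forall j, 0 < w 0 j) -> gram w \in unitmx.
Proof.
move=> U_free w_gt0; rewrite -row_free_unit -kermx_eq0; apply/eqP/row_matrixP => i.
set v := row i _; have v_ker : v *m gram w = 0 by apply/sub_kermxP; rewrite row_sub.
have /qform_gram_eq0 : qform (gram w) v = 0 by rewrite /qform v_ker mul0mx mxE.
by move=> /(_ w_gt0)/eqP; rewrite mulmx_free_eq0 // row0 => /eqP.
Qed.

Lemma lev_invform w j : lev U w j = w 0 j * invform (gram w) (col j U)^T.
Proof. by rewrite /lev /invform /qform trmxK. Qed.

Lemma lev_diag w j : lev U w j = w 0 j * (U^T *m invmx (gram w) *m U) j j.
Proof.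
rewrite /lev tr_col -row_mul !mxE; congr (_ * _).
by apply: eq_bigr => k _; rewrite !mxE.
Qed.

Lemma sum_lev w : gram w \in unitmx -> \sum_j lev U w j = d%:R.
Proof.
move=> gram_unit_w; rewrite -(mxtrace1 R d) -(mulmxV gram_unit_w).
have -> : \sum_j lev U w j = \tr (diag_mx w *m (U^T *m invmx (gram w) *m U)).
  by rewrite /mxtrace; apply: eq_bigr => j _; rewrite lev_diag mul_diag_mx [RHS]mxE.
by rewrite !mulmxA mxtrace_mulC !mulmxA.
Qed.

End Gram.

Lemma ler_term_psum (R : numDomainType) (I : finType) (P : pred I) (F : I -> R) j :
  (forall i, P i -> 0 <= F i) -> P j -> F j <= \sum_(i | P i) F i.
Proof.
move=> F_ge0 Pj; rewrite (bigD1 j) //= lerDl sumr_ge0 // => i /andP[Pi _].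
exact: F_ge0.
Qed.

Section MarginGain.
Variables (R : realFieldType) (I : finType) (T : {set I}) (a D : I -> R) (nu g : R).
Hypotheses (a_in : forall j, j \in T -> a j <= nu - g)
           (a_notin : forall j, j \notin T -> nu + g <= a j)
           (D_in : forall j, j \in T -> 0 <= D j)
           (D_notin : forall j, j \notin T -> D j <= 0)
           (D_sum0 : \sum_j D j = 0).

Let delta := \sum_(j in T) D j.

Lemma sum_norm_in : \sum_(j in T) `|D j| = delta.
Proof. by apply: eq_bigr => j /D_in/ger0_norm. Qed.

Lemma sum_norm_notin : \sum_(j | j \notin T) `|D j| = delta.
Proof.
rewrite (eq_bigr (fun j => - D j)) => [|j /D_notin/ler0_norm //].
by move: D_sum0; rewrite sumrN (bigID (mem T)) /= /delta; lra.
Qed.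

Lemma norm_le_delta j : `|D j| <= delta.
Proof.
case: (boolP (j \in T)) => jT.
- by rewrite -sum_norm_in ler_term_psum.
- by rewrite -sum_norm_notin ler_term_psum.
Qed.

Lemma sum_norm_delta : \sum_j `|D j| = delta *+ 2.
Proof. by rewrite (bigID (mem T)) /= sum_norm_in sum_norm_notin. Qed.

Lemma sqr_gain_ge j : - 2 * nu * D j + (2 * g - delta) * `|D j| <= a j ^+ 2 - (a j + D j) ^+ 2.
Proof.
have le_delta := norm_le_delta j.
case: (boolP (j \in T)) => jT.
- have D_ge0 := D_in jT; have a_le := a_in jT.
  by rewrite ger0_norm // in le_delta *; nra.
- have D_le0 := D_notin jT; have a_ge := a_notin jT.
  by rewrite ler0_norm // in le_delta *; nra.
Qed.

Lemma margin_gain : delta <= g -> 2 * g * delta <= \sum_j (a j ^+ 2 - (a j + D j) ^+ 2).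
Proof.
move=> le_delta_g; apply: le_trans (ler_sum _ (fun j _ => sqr_gain_ge j)).
rewrite big_split /= -!mulr_sumr D_sum0 sum_norm_delta.
have : 0 <= delta by rewrite sumr_ge0.
nra.
Qed.

End MarginGain.

Lemma scaleTE (R : realFieldType) (n : nat) (T : {set 'I_n}) (alpha : R) (z : 'rV[R]_n) j :
  scaleT T alpha z 0 j = z 0 j * (if j \in T then alpha else 1).
Proof. by rewrite mxE; case: (j \in T); ring. Qed.

Lemma scaleT1 (R : realFieldType) (n : nat) (T : {set 'I_n}) (z : 'rV[R]_n) : scaleT T 1 z = z.
Proof. by apply/rowP => j; rewrite scaleTE; case: ifP; rewrite mulr1. Qed.

Section Scaling.
Variables (R : realFieldType) (d n : nat) (U : 'M[R]_(d, n)).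
Variables (z : 'rV[R]_n) (T : {set 'I_n}) (alpha : R).
Hypotheses (U_free : row_free U) (z_gt0 : forall j, 0 < z 0 j) (alpha_ge1 : 1 <= alpha).

Let z' := scaleT T alpha z.

Lemma scaleT_ge j : z 0 j <= z' 0 j.
Proof. by rewrite scaleTE; case: ifP => _; rewrite ?mulr1 // ler_pMr. Qed.

Lemma scaleT_le j : z' 0 j <= alpha * z 0 j.
Proof. by rewrite scaleTE mulrC; case: ifP => _; rewrite ?mul1r // ler_pMl. Qed.

Lemma scaleT_gt0 j : 0 < z' 0 j.
Proof. exact: lt_le_trans (z_gt0 j) (scaleT_ge j). Qed.

Lemma lev_scaleT_in j : j \in T -> lev U z j <= lev U z' j.
Proof.
move=> jT; rewrite !lev_invform scaleTE jT -mulrA.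
apply: ler_wpM2l; first exact: ltW.
apply: invform_le_scale; rewrite ?trmx_gram ?gram_unit //; first exact: scaleT_gt0.
- by move=> x; rewrite qform_gram_ge0 // => i; rewrite ltW ?scaleT_gt0.
- exact: lt_le_trans ltr01 alpha_ge1.
- move=> x; rewrite !qform_gram mulr_sumr ler_sum // => i _.
  by rewrite [leRHS]mulrA ler_wpM2r ?sqr_ge0 ?scaleT_le.
Qed.

Lemma lev_scaleT_notin j : j \notin T -> lev U z' j <= lev U z j.
Proof.
move=> jT; rewrite !lev_invform scaleTE (negbTE jT) mulr1.
apply: ler_wpM2l; first exact: ltW.
rewrite -[X in _ <= X]mul1r; apply: invform_le_scale; rewrite ?trmx_gram ?gram_unit //.
- exact: scaleT_gt0.
- by move=> x; rewrite qform_gram_ge0 // => i; rewrite ltW.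
- by move=> x; rewrite mul1r ler_qform_gram // => i; rewrite scaleT_ge.
Qed.

End Scaling.

Theorem lemma2p11 (R : realFieldType) (d n : nat) (U : 'M[R]_(d, n))
  (z c : 'rV[R]_n) (T : {set 'I_n}) (gamma alpha : R) :
  frame U ->
  (forall j, 0 < z 0 j) ->
  (forall j, 0 <= c 0 j) ->
  has_margin U z c T gamma ->
  1 <= alpha ->
  0 <= progress U z T alpha - progress U z T 1 ->
  progress U z T alpha - progress U z T 1 <= gamma ->
  levdist2 U z c - levdist2 U (scaleT T alpha z) c
    >= 2 * gamma * (progress U z T alpha - progress U z T 1).
Proof.
move=> U_frame z_gt0 _ [[_ [nu [a_in [_ a_notin]]]] _] alpha_ge1 _ le_gamma.
have U_free : row_free U by apply/eqP.
set z' := scaleT T alpha z.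
pose D j := lev U z' j - lev U z j.
have D_sum0 : \sum_j D j = 0.
  by rewrite sumrB !sum_lev ?subrr ?gram_unit // => j; apply: scaleT_gt0.
have progressE : progress U z T alpha - progress U z T 1 = \sum_(j in T) D j.
  by rewrite /progress scaleT1 sumrB.
rewrite progressE in le_gamma *.
have -> : levdist2 U z c - levdist2 U z' c =
    \sum_j ((lev U z j - c 0 j) ^+ 2 - (lev U z j - c 0 j + D j) ^+ 2).
  by rewrite /levdist2 -sumrB; apply: eq_bigr => j _; rewrite /D; congr (_ - _ ^+ 2); ring.
apply: (margin_gain a_in a_notin) => // j jT; rewrite ?subr_ge0 ?subr_le0.
- exact: lev_scaleT_in.
- exact: lev_scaleT_notin.
Qed.
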